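(* For every $\varepsilon>0$ and $n\in\mathbb{N}$ there exists $N\in\mathbb{N}$ such that the following holds for every $N$-partitioned hypergraph $H$ and every choice of vertices $\gamma_{ik},\gamma^1_{ik},\gamma^2_{ik}\in V_{ik}$, $i<k$, $i,k\in[N]$. For $i<j<k<\ell$ in $[N]$ let $A_{ijk\ell}\subseteq V_{jk}$ be the set of left neighbors of $\gamma_{j\ell}$ in the $(j,k,\ell)$-triad, $B_{ijk\ell}\subseteq V_{jk}$ the set of right neighbors of $\gamma_{ik}$ in the $(i,j,k)$-triad, and $X_{ijk\ell}=V_{jk}\setminus(A_{ijk\ell}\cup B_{ijk\ell})$; define $A^1_{ijk\ell},B^1_{ijk\ell},X^1_{ijk\ell}$ in the same way with $\gamma^1$ in place of $\gamma$, and $A^2_{ijk\ell},B^2_{ijk\ell},X^2_{ijk\ell}$ with $\gamma^2$ in place of $\gamma$. Then there exist an induced $n$-partitioned subhypergraph $H_0$ of $H$ with index set $I$ and reals $d_{\kappa\kappa^1\kappa^2}\in[0,1]$, indexed by $\kappa,\kappa^1,\kappa^2\in\{A,B,X\}$, such that $$\left|\frac{|\kappa_{ijk\ell}\cap(\kappa^1)^1_{ijk\ell}\cap(\kappa^2)^2_{ijk\ell}|}{|V_{jk}|}-d_{\kappa\kappa^1\kappa^2}\right|\le\varepsilon$$ for all $\kappa,\kappa^1,\kappa^2\in\{A,B,X\}$ and all $i<j<k<\ell$ in $I$ (where $\kappa_{ijk\ell}$ denotes $A_{ijk\ell}$, $B_{ijk\ell}$ or $X_{ijk\ell}$ according to $\kappa$,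 and similarly for the superscripted sets). Moreover, if for all $i<j<k<\ell$ the sets $A_{ijk\ell}$ and $B_{ijk\ell}$ are disjoint, $A^1_{ijk\ell}$ and $B^1_{ijk\ell}$ are disjoint, and $A^2_{ijk\ell}$ and $B^2_{ijk\ell}$ are disjoint, then $\sum_{\kappa,\kappa^1,\kappa^2\in\{A,B,X\}}d_{\kappa\kappa^1\kappa^2}\le 1+27\varepsilon$.
   Context: An $n$-partitioned hypergraph $H$ is a finite $3$-uniform hypergraph whose vertex set is partitioned into nonempty sets $V_{ij}$, $1\le i<j\le n$, such that every edge has, for some $1\le i<j<k\le n$, exactly one vertex in each of $V_{ij}$, $V_{ik}$, $V_{jk}$; the set of such edges is the $(i,j,k)$-triad. For $v\in V_{ik}$, a left neighbor (right neighbor) of $v$ in the $(i,j,k)$-triad is a vertex of $V_{ij}$ (of $V_{jk}$) contained together with $v$ in an edge of that triad. For $I\subseteq[n]$, the induced subhypergraph with index set $I$ is the $|I|$-partitioned hypergraph with parts $V_{ij}$, $i<j$, $i,j\in I$ (indexed by elements of $I$) and all edges of $H$ inside these parts. *)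

From HB Require Import structures.
From mathcomp Require Import all_boot all_order all_algebra.
From mathcomp Require Import reals.
Set Implicit Arguments. Unset Strict Implicit. Unset Printing Implicit Defensive.

(* An N-partitioned hypergraph: vertex type V (finite), part assignment
   part v = (i,j) meaning v \in V_ij (indices in 'I_N, 0-based), and the
   edge set E of 3-element vertex sets. *)

Section Hyp.
Variables (N : nat) (V : finType) (part : V -> 'I_N * 'I_N) (E : {set {set V}}).

Definition Vpart (i j : 'I_N) : {set V} := [set v | part v == (i, j)].

Definition triad_shape (i j k : 'I_N) (e : {set V}) : bool :=
  (i < j < k)%N &&
  [exists a : V, exists b : V, exists c : V,
     [&& e == [set a; b; c], part a == (i, j), part b == (i, k)
       & part c == (j, k)]].

Definition is_npart : Prop :=
  (forall v : V, ((part v).1 < (part v).2)%N) /\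
  (forall i j : 'I_N, (i < j)%N -> exists v : V, part v = (i, j)) /\
  (forall e, e \in E -> exists i j k : 'I_N, triad_shape i j k e).

Definition left_nbrs (i j k : 'I_N) (v : V) : {set V} :=
  [set u | (part u == (i, j)) &&
           [exists e in E, [&& triad_shape i j k e, u \in e & v \in e]]].

Definition right_nbrs (i j k : 'I_N) (v : V) : {set V} :=
  [set u | (part u == (j, k)) &&
           [exists e in E, [&& triad_shape i j k e, u \in e & v \in e]]].

Variable gamma : 'I_N -> 'I_N -> V.

Definition Aset (i j k l : 'I_N) : {set V} := left_nbrs j k l (gamma j l).
Definition Bset (i j k l : 'I_N) : {set V} := right_nbrs i j k (gamma i k).
Definition Xset (i j k l : 'I_N) : {set V} :=
  Vpart j k :\: (Aset i j k l :|: Bset i j k l).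

(* kappa \in {A,B,X} encoded as 'I_3 : 0 = A, 1 = B, 2 = X *)
Definition kset (kap : 'I_3) (i j k l : 'I_N) : {set V} :=
  match val kap with
  | 0 => Aset i j k l
  | 1 => Bset i j k l
  | _ => Xset i j k l
  end.

End Hyp.

From HB Require Import structures.
From mathcomp Require Import all_boot all_order all_algebra.
From mathcomp Require Import reals lra.
Import Order.TTheory GRing.Theory Num.Theory.

Set Implicit Arguments.
Unset Strict Implicit.
Unset Printing Implicit Defensive.

(* Colour every quadruple i < j < k < l of indices by its 27 densities, each
   rounded down to a multiple of 1/K where 1/K <= eps.  Ramsey's theorem for
   4-uniform hypergraphs with finitely many colours gives a large index set on
   which this colour is constant, and the rounded values are the d's.  Under
   the disjointness hypothesis A, B, X partition V_jk for each of the three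
   choices of gammas, so the 27 densities of a quadruple sum to 1 and the d's
   sum to at most 1 + 27 eps. *)

Lemma exists_subset_card (T : finType) (A : {set T}) k :
  k <= #|A| -> exists2 B : {set T}, B \subset A & #|B| = k.
Proof.
case/card_geqP=> s [uniq_s <- sA]; exists [set x in s].
  by apply/subsetP=> x; rewrite inE => /sA.
by rewrite cardsE; apply/card_uniqP.
Qed.

Lemma sum_count_mem (C : finType) (s : seq C) :
  \sum_(c : C) count_mem c s = size s.
Proof.
elim: s => [|x s IHs] /=; first by rewrite big1.
rewrite big_split /= IHs (bigD1 x) //= eqxx big1 // => c /negPf.
by rewrite eq_sym => ->.
Qed.

Lemma pigeonhole_count (C : finType) (s : seq C) n :
  #|C| * n < size s -> exists c, n < count_mem c s.
Proof.
move=> lt_s; apply/existsP; apply: contraLR lt_s => /existsPn small.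
rewrite -leqNgt -sum_count_mem -sum_nat_const; apply: leq_sum => c _.
by rewrite leqNgt small.
Qed.

Definition homogeneous (T C : finType) (f : {set T} -> C) r (H : {set T}) c :=
  forall U : {set T}, U \subset H -> #|U| = r -> f U = c.

Definition ramsey_bound (C : finType) (r n N : nat) : Prop :=
  forall (T : finType) (f : {set T} -> C) (D : {set T}), N <= #|D| ->
  exists H : {set T},
    [/\ H \subset D, #|H| = n & exists c, homogeneous f r H c].

Lemma ramsey_bound0 (C : finType) n : ramsey_bound C 0 n n.
Proof.
move=> T f D /exists_subset_card [H sHD cardH]; exists H; split=> //.
by exists (f set0) => U _ /cards0_eq ->.
Qed.

Section EndHomogeneous.
Variables (T C : finType) (f : {set T} -> C) (r : nat).

Fixpoint end_homogeneous (vs : seq (T * C)) : Prop :=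
  if vs is (v, c) :: ws then
    [/\ v \notin map fst ws,
        forall U : {set T}, U \subset [set x in map fst ws] -> #|U| = r ->
          f (v |: U) = c
      & end_homogeneous ws]
  else True.

Lemma end_homogeneous_subseq ws vs :
  subseq ws vs -> end_homogeneous vs -> end_homogeneous ws.
Proof.
elim: vs ws => [|[v c] vs IHvs] [|[w c'] ws] //= sub_ws [v_fresh hom_v hom_vs].
case: eqP sub_ws => [[-> ->]|_] sub_ws; last exact: IHvs sub_ws hom_vs.
have sub_fst : {subset map fst ws <= map fst vs}.
  by apply: mem_subseq; apply: map_subseq.
split; last exact: IHvs.
- by apply: contra v_fresh => /sub_fst.
- move=> U sUws; apply: hom_v; apply: subset_trans sUws _.
  by apply/subsetP => x; rewrite !inE => /sub_fst.
Qed.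

Lemma end_homogeneous_uniq vs : end_homogeneous vs -> uniq (map fst vs).
Proof. by elim: vs => [|[v c] vs IHvs] //= [-> _ /IHvs]. Qed.

Lemma end_homogeneous_homogeneous vs c :
  end_homogeneous vs -> all (fun p => p.2 == c) vs ->
  homogeneous f r.+1 [set x in map fst vs] c.
Proof.
elim: vs => [|[v c'] vs IHvs] /=.
  by move=> _ _ U /subset_leq_card; rewrite cardsE card0 leqn0 => /eqP ->.
move=> [_ hom_v hom_vs] /andP [/eqP eq_c all_c] U sU cardU; subst c'.
have [vU|vNU] := boolP (v \in U); last first.
  apply: IHvs => //; apply/subsetP => x xU; move/subsetP: sU => /(_ x xU).
  by rewrite !inE => /predU1P [xv|//]; rewrite -xv xU in vNU.
rewrite -(setD1K vU) hom_v //; last first.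
  by move: cardU; rewrite (cardsD1 v U) vU => -[].
apply/subsetP => x; rewrite !inE => /andP [xNv xU].
by move/subsetP: sU => /(_ x xU); rewrite !inE (negPf xNv).
Qed.

End EndHomogeneous.

Lemma end_homogeneous_chain (C : finType) r :
  (forall n, exists N, ramsey_bound C r n N) ->
  forall m, exists L, forall (T : finType) (f : {set T} -> C) (D : {set T}),
  L <= #|D| ->
  exists vs,
    [/\ size vs = m, {subset map fst vs <= D} & end_homogeneous f r vs].
Proof.
move=> ramsey_r; elim=> [|m [L chainL]].
  by exists 0 => T f D _; exists [::].
have [N ramseyN] := ramsey_r L.
exists N.+1 => T f D /[dup] /(leq_trans (ltn0Sn N)) /card_gt0P [v vD].
rewrite (cardsD1 v) vD ltnS => /(ramseyN _ (fun U => f (v |: U))).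
case=> [H [sHD cardH [c hom_c]]].
have [vs [size_vs sub_vs hom_vs]] := chainL T f H (eq_leq (esym cardH)).
have vs_D1 x : x \in map fst vs -> x \in D :\ v by move/sub_vs/(subsetP sHD).
exists ((v, c) :: vs); split=> /=; first by rewrite size_vs.
- by move=> x /predU1P [->|/vs_D1 /setD1P []].
- split=> //; first by apply/negP => /vs_D1; rewrite !inE eqxx.
  move=> U sU; apply: hom_c; apply: subset_trans sU _.
  by apply/subsetP => x; rewrite inE => /sub_vs.
Qed.

(* Erdos-Rado stepping up: along a long end-homogeneous chain, the colour of
   an [r.+1]-set depends only on its first vertex; pigeonhole on those
   colours. *)
Lemma ramsey_boundS (C : finType) r :
  (forall n, exists N, ramsey_bound C r n N) ->
  forall n, exists N, ramsey_bound C r.+1 n N.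
Proof.
move=> /end_homogeneous_chain chain n; have [L chainL] := chain (#|C| * n).+1.
exists L => T f D /(chainL T f) [vs [size_vs sub_vs hom_vs]].
have [c count_c] : exists c, n < count_mem c (map snd vs).
  by apply: pigeonhole_count; rewrite size_map size_vs.
set ws := filter (fun p => p.2 == c) vs.
have hom_ws : end_homogeneous f r ws.
  exact: end_homogeneous_subseq (filter_subseq _ _) hom_vs.
have : n <= #|[set x in map fst ws]|.
  rewrite cardsE (card_uniqP (end_homogeneous_uniq hom_ws)).
  rewrite size_map size_filter.
  by rewrite count_map in count_c; apply: ltnW.
case/exists_subset_card=> H sH cardH; exists H; split=> //.
  apply: subset_trans sH _; apply/subsetP => x; rewrite inE => /mapP [p].
  by rewrite mem_filter => /andP [_ /(map_f fst) /sub_vs] + ->.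
exists c => U sU.
exact: end_homogeneous_homogeneous hom_ws (filter_all _ _) _
  (subset_trans sU sH).
Qed.

Theorem ramsey (C : finType) r n : exists N, ramsey_bound C r n N.
Proof.
elim: r n => [|r IHr] n; first by exists n; apply: ramsey_bound0.
exact: ramsey_boundS.
Qed.

Section SortedOrdinals.
Variable N : nat.
Implicit Types (A : {set 'I_N}) (s : seq 'I_N).

Lemma sorted_enum_set A : sorted <%O (enum A).
Proof.
apply: sorted_filter; first exact: lt_trans.
by have := iota_ltn_sorted 0 N; rewrite -val_enum_ord sorted_map enumT.
Qed.

Lemma enum_set_sorted s : sorted <%O s -> enum [set x in s] = s.
Proof.
move=> sorted_s.
apply: (irr_sorted_eq lt_trans ltxx (sorted_enum_set _) sorted_s).
by move=> x; rewrite mem_enum inE.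
Qed.

Lemma sorted_subset_card A r :
  r <= #|A| -> exists s, [/\ sorted <%O s, size s = r & {subset s <= A}].
Proof.
move=> le_r_A; exists (take r (enum A)); split.
- exact: (subseq_sorted lt_trans (take_subseq (enum A) r) (sorted_enum_set A)).
- by rewrite size_take -cardE; case: ltngtP le_r_A => // ->.
- by move=> x /mem_take; rewrite mem_enum.
Qed.

Lemma exists_increasing4 A : 4 <= #|A| ->
  exists i j k l, [/\ [/\ i \in A, j \in A, k \in A & l \in A],
                      (i < j)%N, (j < k)%N & (k < l)%N].
Proof.
case/sorted_subset_card=> s [+ + sA].
case: s sA => [|i [|j [|k [|l [|? ?]]]]] //= sA /and4P [ij jk kl _] _.
by exists i, j, k, l; split=> //; split; apply: sA; rewrite !inE eqxx ?orbT.
Qed.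

End SortedOrdinals.

Theorem ramsey_sorted (C : finType) r n : exists N, forall f : seq 'I_N -> C,
  exists H : {set 'I_N}, #|H| = n /\ exists c, forall s,
    sorted <%O s -> size s = r -> {subset s <= H} -> f s = c.
Proof.
have [N ramseyN] := ramsey C r n; exists N => f.
have [|H [_ cardH [c hom_c]]] := ramseyN _ (fun U => f (enum U)) setT.
  by rewrite cardsT card_ord.
exists H; split=> //; exists c => s sorted_s size_s sub_s.
rewrite -(enum_set_sorted sorted_s); apply: hom_c.
  by apply/subsetP => x; rewrite inE => /sub_s.
rewrite cardsE -size_s; apply/card_uniqP.
exact: sorted_uniq lt_trans ltxx _ sorted_s.
Qed.

Section IndexedPartition.
Variables (T : finType) (W : {set T}).

Definition indexed_partition (I : finType) (P : I -> {set T}) :=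
  forall x, \sum_i (x \in P i) = (x \in W).

Lemma indexed_partition_sub (I : finType) (P : I -> {set T}) i :
  indexed_partition P -> P i \subset W.
Proof.
move=> partP; apply/subsetP => x xP; have := partP x.
by rewrite (bigD1 i) //= xP; case: (x \in W).
Qed.

Lemma card_setI_indexed_partition (I : finType) (P : I -> {set T})
    (A : {set T}) :
  indexed_partition P -> A \subset W -> \sum_i #|A :&: P i| = #|A|.
Proof.
move=> partP sAW; have card_meet B : #|A :&: B| = \sum_(x in A) (x \in B).
  rewrite -sum1_card big_mkcond [RHS]big_mkcond; apply: eq_bigr => x _.
  by rewrite inE; case: (x \in A); case: (x \in B).
under eq_bigr do rewrite card_meet; rewrite exchange_big -sum1_card.
by apply: eq_bigr => x xA; rewrite partP (subsetP sAW).
Qed.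

Lemma card_indexed_partition3 (I J K : finType)
    (P : I -> {set T}) (Q : J -> {set T}) (S : K -> {set T}) :
  indexed_partition P -> indexed_partition Q -> indexed_partition S ->
  \sum_a \sum_b \sum_c #|P a :&: Q b :&: S c| = #|W|.
Proof.
move=> partP partQ partS; transitivity (\sum_a #|P a|).
  apply: eq_bigr => a _; have sPa := indexed_partition_sub a partP.
  rewrite -(card_setI_indexed_partition partQ sPa); apply: eq_bigr => b _.
  exact: card_setI_indexed_partition partS (subset_trans (subsetIl _ _) sPa).
rewrite -(card_setI_indexed_partition partP (subxx W)).
by apply: eq_bigr => a _; rewrite (setIidPr (indexed_partition_sub _ partP)).
Qed.

End IndexedPartition.

Local Open Scope ring_scope.

Section Approximation.
Variable R : archiRealFieldType.

Lemma truncn_mul_le (x : R) K : 0 <= x <= 1 -> (Num.truncn (x * K%:R) <= K)%N.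
Proof.
case/andP=> x_ge0 x_le1; rewrite truncn_le_nat (@le_lt_trans _ _ K%:R) //.
  by rewrite ler_piMl.
by rewrite ltr_nat.
Qed.

Lemma dist_truncn_div (x : R) K : 0 <= x -> (0 < K)%N ->
  `|x - (Num.truncn (x * K%:R))%:R / K%:R| <= K%:R^-1.
Proof.
move=> x_ge0 K_gt0; have K_gt0R : 0 < K%:R :> R by rewrite ltr0n.
have ub := truncnS_gt (x * K%:R); rewrite -natr1 in ub.
have lb : (Num.truncn (x * K%:R))%:R <= x * K%:R by rewrite truncn_le mulr_ge0.
set t := (Num.truncn (x * K%:R))%:R in ub lb *.
have -> : x - t / K%:R = (x * K%:R - t) / K%:R by rewrite mulrBl mulfK ?gt_eqF.
rewrite normrM normfV (gtr0_norm K_gt0R) ger0_norm ?subr_ge0 //.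
rewrite -[leRHS]mul1r ler_wpM2r ?invr_ge0 ?ltW //; lra.
Qed.

Lemma ler_sum_dist (A : finType) (x y : A -> R) (eps : R) :
  (forall a, `|x a - y a| <= eps) -> \sum_a y a <= \sum_a x a + #|A|%:R * eps.
Proof.
move=> dist_xy; rewrite mulr_natl -sumr_const -big_split /=.
by apply: ler_sum => a _; move: (dist_xy a); rewrite ler_norml; lra.
Qed.

Lemma ramsey_approx (A : finType) r n (eps : R) : 0 < eps ->
  exists N, forall f : A -> seq 'I_N -> R, (forall a s, 0 <= f a s <= 1) ->
  exists H : {set 'I_N}, #|H| = n /\
  exists d : A -> R, (forall a, 0 <= d a <= 1) /\
    (forall a s, sorted <%O s -> size s = r -> {subset s <= H} ->
       `|f a s - d a| <= eps).
Proof.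
move=> eps_gt0; set K := (Num.truncn eps^-1).+1.
have K_gt0R : 0 < K%:R :> R by rewrite ltr0n.
have invK_le : K%:R^-1 <= eps.
  by rewrite -[eps]invrK lef_pV2 ?posrE ?invr_gt0 // ltW // truncnS_gt.
have [N ramseyN] := ramsey_sorted {ffun A -> 'I_K.+1} r n.
exists N => f f01.
pose round s := [ffun a => inord (Num.truncn (f a s * K%:R)) : 'I_K.+1].
have [H [cardH [c hom_c]]] := ramseyN round.
exists H; split=> //; exists (fun a => (c a : nat)%:R / K%:R); split.
  move=> a; rewrite divr_ge0 //= ler_pdivrMr // mul1r ler_nat -ltnS.
  exact: ltn_ord.
move=> a s sorted_s size_s sub_s; have /andP [fas_ge0 _] := f01 a s.
rewrite -(hom_c s sorted_s size_s sub_s) ffunE inordK ?ltnS ?truncn_mul_le //.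
exact: le_trans (dist_truncn_div fas_ge0 (ltn0Sn _)) invK_le.
Qed.

Lemma ramsey_approx4 (A : finType) n (eps : R) : 0 < eps ->
  exists N, forall f : A -> 'I_N -> 'I_N -> 'I_N -> 'I_N -> R,
  (forall a i j k l, 0 <= f a i j k l <= 1) ->
  exists H : {set 'I_N}, #|H| = n /\
  exists d : A -> R, (forall a, 0 <= d a <= 1) /\
    (forall a i j k l, i \in H -> j \in H -> k \in H -> l \in H ->
       (i < j)%N -> (j < k)%N -> (k < l)%N -> `|f a i j k l - d a| <= eps).
Proof.
move=> /(ramsey_approx A 4 n) [N ramseyN]; exists N => f f01.
pose f_seq a s := if s is [:: i; j; k; l] then f a i j k l else 0.
have [|H [cardH [d [d01 approx]]]] := ramseyN f_seq.
  by move=> a [|i [|j [|k [|l [|? ?]]]]]; rewrite /= ?lexx ?ler01 ?f01.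
exists H; split=> //; exists d; split=> // a i j k l iH jH kH lH ij jk kl.
apply: (approx a [:: i; j; k; l]) => //; first exact/and4P.
by move=> x; rewrite !inE => /or4P [] /eqP ->.
Qed.

End Approximation.

Section Densities.
Variables (N : nat) (V : finType) (part : V -> 'I_N * 'I_N) (E : {set {set V}}).
Implicit Types (g : 'I_N -> 'I_N -> V) (i j k l : 'I_N).

Lemma Aset_subset g i j k l : Aset part E g i j k l \subset Vpart part j k.
Proof. by apply/subsetP => x; rewrite !inE => /andP []. Qed.

Lemma Bset_subset g i j k l : Bset part E g i j k l \subset Vpart part j k.
Proof. by apply/subsetP => x; rewrite !inE => /andP []. Qed.

Lemma kset_subset g (a : 'I_3) i j k l :
  kset part E g a i j k l \subset Vpart part j k.
Proof.
case: a => [[|[|a]] lt_a3];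
  [exact: Aset_subset | exact: Bset_subset | exact: subsetDl].
Qed.

Lemma kset_partition g i j k l :
  [disjoint Aset part E g i j k l & Bset part E g i j k l] ->
  indexed_partition (Vpart part j k) (fun a => kset part E g a i j k l).
Proof.
move=> disjAB x; rewrite !big_ord_recr big_ord0 /= /kset /=.
rewrite /Xset in_setD in_setU.
have [xA|xNA] := boolP (x \in Aset part E g i j k l).
  by rewrite (disjointFr disjAB xA) (subsetP (Aset_subset g i j k l) x xA).
have [xB|xNB] := boolP (x \in Bset part E g i j k l).
  by rewrite (subsetP (Bset_subset g i j k l) x xB).
by case: (x \in Vpart part j k).
Qed.

Lemma Vpart_card_gt0 j k :
  is_npart part E -> (j < k)%N -> (0 < #|Vpart part j k|)%N.
Proof.
case=> _ [Vpart_inhabited _] /Vpart_inhabited [v part_v].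
by apply/card_gt0P; exists v; rewrite inE part_v.
Qed.

Variable R : numFieldType.

Definition density g g1 g2 (a b c : 'I_3) i j k l : R :=
  (#|kset part E g a i j k l :&: kset part E g1 b i j k l
       :&: kset part E g2 c i j k l|)%:R / (#|Vpart part j k|)%:R.

Lemma density_ge0_le1 g g1 g2 a b c i j k l :
  0 <= density g g1 g2 a b c i j k l <= 1.
Proof.
rewrite /density divr_ge0 //=; have [->|Vjk_gt0] := posnP #|Vpart part j k|.
  by rewrite invr0 mulr0.
rewrite ler_pdivrMr ?ltr0n // mul1r ler_nat; apply: subset_leq_card.
by rewrite -setIA; apply: subset_trans (subsetIl _ _) (kset_subset _ _ _ _ _ _).
Qed.

Lemma sum_density g g1 g2 i j k l : (0 < #|Vpart part j k|)%N ->
  [disjoint Aset part E g i j k l & Bset part E g i j k l] ->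
  [disjoint Aset part E g1 i j k l & Bset part E g1 i j k l] ->
  [disjoint Aset part E g2 i j k l & Bset part E g2 i j k l] ->
  \sum_a \sum_b \sum_c density g g1 g2 a b c i j k l = 1.
Proof.
move=> Vjk_gt0 disj disj1 disj2; transitivity
  ((\sum_a \sum_b \sum_c #|kset part E g a i j k l :&: kset part E g1 b i j k l
       :&: kset part E g2 c i j k l|)%:R / (#|Vpart part j k|)%:R : R).
  rewrite natr_sum mulr_suml; apply: eq_bigr => a _.
  rewrite natr_sum mulr_suml; apply: eq_bigr => b _.
  by rewrite natr_sum mulr_suml.
rewrite (card_indexed_partition3 (kset_partition disj) (kset_partition disj1)
  (kset_partition disj2)) divff //.
by rewrite pnatr_eq0 -lt0n.
Qed.

End Densities.

Lemma pair_big3 (M : nmodType) (I J K : finType) (F : I -> J -> K -> M) :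
  \sum_a \sum_b \sum_c F a b c = \sum_(t : I * J * K) F t.1.1 t.1.2 t.2.
Proof. by rewrite !pair_big. Qed.

Theorem lemma6p1 (R : realType) (eps : R) (n : nat) :
  0 < eps ->
  exists N : nat,
  forall (V : finType) (part : V -> 'I_N * 'I_N) (E : {set {set V}}),
  is_npart part E ->
  forall g g1 g2 : 'I_N -> 'I_N -> V,
  (forall i k : 'I_N, (i < k)%N ->
     [/\ part (g i k) = (i, k), part (g1 i k) = (i, k) & part (g2 i k) = (i, k)]) ->
  exists I : {set 'I_N}, #|I| = n /\
  exists d : 'I_3 -> 'I_3 -> 'I_3 -> R,
    (forall a b c : 'I_3, 0 <= d a b c <= 1) /\
    (forall (a b c : 'I_3) (i j k l : 'I_N),
       i \in I -> j \in I -> k \in I -> l \in I ->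
       (i < j)%N -> (j < k)%N -> (k < l)%N ->
       `| (#|kset part E g a i j k l :&: kset part E g1 b i j k l
              :&: kset part E g2 c i j k l|)%:R / (#|Vpart part j k|)%:R
          - d a b c| <= eps) /\
    ((forall i j k l : 'I_N, (i < j)%N -> (j < k)%N -> (k < l)%N ->
        [/\ [disjoint Aset part E g i j k l & Bset part E g i j k l],
            [disjoint Aset part E g1 i j k l & Bset part E g1 i j k l]
          & [disjoint Aset part E g2 i j k l & Bset part E g2 i j k l]]) ->
     \sum_(a < 3) \sum_(b < 3) \sum_(c < 3) d a b c <= 1 + 27%:R * eps).
Proof.
move=> eps_gt0.
have [N ramseyN] := ramsey_approx4 ('I_3 * 'I_3 * 'I_3)%type (maxn n 4) eps_gt0.
(* Where the gammas lie is irrelevant: the densities are bounded, and sum to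
   1 under disjointness, for any choice of vertices. *)
exists N => V part E npart g g1 g2 _.
pose dens t := density part E R g g1 g2 t.1.1 t.1.2 t.2.
have [|H [cardH [d [d01 approx]]]] := ramseyN dens.
  by move=> *; apply: density_ge0_le1.
have [le_n_H le_4_H] : (n <= #|H|)%N /\ (4 <= #|H|)%N.
  by rewrite cardH leq_maxl leq_maxr.
have [I /subsetP sIH cardI] := exists_subset_card le_n_H.
exists I; split=> //; exists (fun a b c => d (a, b, c)); split.
  by move=> a b c; apply: d01.
split=> [a b c i j k l /sIH iH /sIH jH /sIH kH /sIH lH|disjoint_AB].
  exact: (approx (a, b, c)).
have [i [j [k [l [[iH jH kH lH] ij jk kl]]]]] := exists_increasing4 le_4_H.
have [disj disj1 disj2] := disjoint_AB i j k l ij jk kl.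
have Vjk_gt0 := Vpart_card_gt0 npart jk.
rewrite -[X in _ <= X + _](sum_density R Vjk_gt0 disj disj1 disj2) !pair_big3.
have := ler_sum_dist (x := fun t => dens t i j k l)
  (y := fun t => d (t.1.1, t.1.2, t.2)) (eps := eps).
rewrite !card_prod !card_ord; apply=> -[[a b] c].
exact: approx.
Qed.
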